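(* Let $G$ be a cubic graph, let $H$ be a hexagon graph of $G$, and let $W$ be the set of white edges of $H$. For every blue perfect matching $M$ of $H$, the set $M\cup W$ ($=M\,\Delta\, W$) is a disjoint union of cycles, and there is an embedding of $G$ on a closed orientable surface whose set of face boundaries is exactly the set of subgraphs of $G$ induced by the cycles of $M\Delta W$. Here the subgraph of $G$ induced by a cycle $C$ of $M\Delta W$ is the subgraph with edge set $\{uv\in E(G): e_{uv}\in C \text{ or } \bar e_{uv}\in C\}$. Conversely, every embedding of $G$ on a closed orientable surface (equivalently, every rotation system of $G$) arises in this way from some blue perfect matching of $H$.
   Context: Hexagon graph. A hexagon is a copy of $K_{3,3}$. Let $G=(V,E)$ be a cubic graph. A hexagon graph $H$ of $G$ is built as follows. (1) Replace each $v\in V$ by a hexagon $h_v$ on vertex set $\{v_i: i\in\mathbb{Z}_6\}$ with edge set $\{v_iv_{i+1}, v_iv_{i+3}: i\in\mathbb{Z}_6\}$, the hexagons being pairwise vertex-disjoint. (2) For each $v$ with $N_G(v)=\{u,w,z\}$, assign to the neighbours pairwise distinct indices $i_{v(u)},i_{v(w)},i_{v(z)}\in\{0,1,2\}\subset\mathbb{Z}_6$. (3) Let $X=\bigcup_v\{v_{2i}\}$ and $Y=\bigcup_v\{v_{2i+1}\}$. Replace each edge $uv\in E$ by two disjoint edges $e_{uv},\bar e_{uv}$: if $v_{i_{v(u)}}$ and $u_{i_{u(v)}}$ both lie in $X$ or both lie in $Y$, put $e_{uv}=v_{i_{v(u)}}u_{i_{u(v)}+3}$, $\bar e_{uv}=v_{i_{v(u)}+3}u_{i_{u(v)}}$;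 otherwise $e_{uv}=v_{i_{v(u)}}u_{i_{u(v)}}$, $\bar e_{uv}=v_{i_{v(u)}+3}u_{i_{u(v)}+3}$. The edges $v_iv_{i+3}$ are red, the edges $v_iv_{i+1}$ are blue, and the edges $e_{uv},\bar e_{uv}$ are white. A blue perfect matching of $H$ is a perfect matching consisting only of blue edges. Rotation system. A rotation system of a graph $G$ is a collection $\{\pi_v: v\in V(G)\}$ where $\pi_v$ is a cyclic permutation of the edges incident with $v$; it determines an embedding of $G$ on a closed orientable surface whose face boundaries are the closed walks $e_1e_2\cdots e_k$ with $e_i=v^iv^{i+1}$, $\pi_{v^{i+1}}(e_i)=e_{i+1}$, $e_{k+1}=e_1$, $k$ minimal. *)

From mathcomp Require Import all_boot.
Set Implicit Arguments. Unset Strict Implicit. Unset Printing Implicit Defensive.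

(* A cubic graph G: vertex type T : finType, adjacency e : rel T,
   symmetric, irreflexive (simple graph), every vertex of degree 3.
   An edge uv of G is represented by the 2-set [set u; v]. *)

Definition nbhd (T : finType) (e : rel T) (v : T) : {set T} := [set u | e v u].

Definition cubic (T : finType) (e : rel T) : Prop :=
  [/\ symmetric e, irreflexive e & forall v, #|nbhd e v| = 3].

Definition index_assignment (T : finType) (e : rel T) (idx : T -> T -> 'I_3) : Prop :=
  forall v, {in nbhd e v &, injective (idx v)}.

Definition hvert (T : finType) := (T * 'I_6)%type.

(* the vertex v_n of the hexagon h_v, index n taken mod 6 *)
Definition hv (T : finType) (v : T) (n : nat) : hvert T := (v, inord (n %% 6)).

Section Hex.
Variables (T : finType) (e : rel T) (idx : T -> T -> 'I_3).

Definition red_edges : {set {set hvert T}} :=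
  [set E | [exists v : T, [exists i : 'I_6, E == [set hv v i; hv v (i + 3)]]]].

Definition blue_edges : {set {set hvert T}} :=
  [set E | [exists v : T, [exists i : 'I_6, E == [set hv v i; hv v i.+1]]]].

(* v_{i_{v(u)}} and u_{i_{u(v)}} lie both in X or both in Y *)
Definition same_side (u v : T) : bool := odd (idx v u) == odd (idx u v).

Definition wedge (u v : T) : {set hvert T} :=
  if same_side u v then [set hv v (idx v u); hv u (idx u v + 3)]
  else [set hv v (idx v u); hv u (idx u v)].

Definition wedgebar (u v : T) : {set hvert T} :=
  if same_side u v then [set hv v (idx v u + 3); hv u (idx u v)]
  else [set hv v (idx v u + 3); hv u (idx u v + 3)].

Definition white_edges : {set {set hvert T}} :=
  [set E | [exists uv : T * T,
     e uv.1 uv.2 && ((E == wedge uv.1 uv.2) || (E == wedgebar uv.1 uv.2))]].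

Definition hex_edges : {set {set hvert T}} :=
  red_edges :|: blue_edges :|: white_edges.

Definition deg_in (F : {set {set hvert T}}) (x : hvert T) : nat :=
  #|[set E in F | x \in E]|.

Definition perfect_matching (M : {set {set hvert T}}) : Prop :=
  M \subset hex_edges /\ forall x : hvert T, deg_in M x = 1.

Definition blue_perfect_matching (M : {set {set hvert T}}) : Prop :=
  perfect_matching M /\ M \subset blue_edges.

Definition disjoint_union_of_cycles (F : {set {set hvert T}}) : Prop :=
  (forall E, E \in F -> #|E| = 2) /\
  (forall x : hvert T, deg_in F x = 0 \/ deg_in F x = 2).

Definition share_rel (F : {set {set hvert T}}) : rel {set hvert T} :=
  fun E1 E2 => [&& E1 \in F, E2 \in F & ~~ [disjoint E1 & E2]].

(* The cycles (connected components, as edge sets) of F. *)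
Definition cycles_of (F : {set {set hvert T}}) : {set {set {set hvert T}}} :=
  [set [set E' | connect (share_rel F) E E'] | E in F].

Definition induced_subgraph (C : {set {set hvert T}}) : {set {set T}} :=
  [set [set uv.1; uv.2] | uv in [set uv : T * T |
     e uv.1 uv.2 && ((wedge uv.1 uv.2 \in C) || (wedgebar uv.1 uv.2 \in C))]].

Definition cycle_subgraphs (M : {set {set hvert T}}) : {set {set {set T}}} :=
  [set induced_subgraph C | C in cycles_of (M :|: white_edges)].

End Hex.

Section Rot.
Variables (T : finType) (e : rel T).

(* rot v is a cyclic permutation of the edges incident with v, i.e. of
   the neighbours of v (G is simple). *)
Definition rotation_system (rot : T -> T -> T) : Prop :=
  forall v,
  [/\ {in nbhd e v, forall u, rot v u \in nbhd e v},
      {in nbhd e v &, injective (rot v)} &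
      {in nbhd e v &, forall u w, exists k, iter k (rot v) u = w}].

(* darts (v^i, v^{i+1}); successor along a face: e_{i+1} = pi_{v^{i+1}}(e_i) *)
Definition face_step (rot : T -> T -> T) (d : T * T) : T * T :=
  (d.2, rot d.2 d.1).

Definition face_edges (rot : T -> T -> T) (d : T * T) : {set {set T}} :=
  [set [set d'.1; d'.2] | d' in [set d' | fconnect (face_step rot) d d']].

Definition faces (rot : T -> T -> T) : {set {set {set T}}} :=
  [set face_edges rot d | d in [set d : T * T | e d.1 d.2]].

End Rot.

From mathcomp Require Import all_boot.
Set Implicit Arguments. Unset Strict Implicit. Unset Printing Implicit Defensive.

(** A vertex x = (v, i) of H is the vertex v_i of the hexagon h_v.  Its index i
  is determined by its parity and its residue i mod 3, and the residue names
  the neighbour u of v with i_{v(u)} = i mod 3: v_i is a "port" of h_v facing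
  u.  The white edge at x leads to a port of h_u facing v, of the opposite
  parity; this gives a fixed-point-free involution [across] with W the set of
  pairs {x, across x}.  A blue perfect matching M is likewise the set of
  pairs {x, mu x} of an involution mu that moves each vertex to a vertex of
  its own hexagon with the other parity and another residue.

  - For any two involutions mu, om with no common edge, the union of their
    edge sets is 2-regular, and its components are described by the orbits of
    phi = om \o mu (section TwoInvolutions).  This yields the first two claims.
  - Given mu, the even port of h_v facing u is matched to an odd port facing a
    neighbour [rot_of v u] <> u; on the three neighbours of v this is a cyclic
    permutation, so [rot_of] is a rotation system.  Following a face of it,
    the even ports at which the face enters the hexagons form an orbit of phi,
    so each face is the subgraph induced by a cycle of M ∪ W, and conversely.
  - A rotation system rot conversely defines such an involution [mu_of], whose
    rotation [rot_of] agrees with rot on every dart; hence both have the same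
    faces.
*)

Lemma card3_fill (X : finType) (A : {set X}) (a b c : X) :
  #|A| = 3 -> a \in A -> b \in A -> c \in A -> a != b -> a != c -> b != c ->
  A = [set a; b; c].
Proof.
move=> cardA aA bA cA ab ac bc; apply/eqP; rewrite eq_sym eqEcard cardA.
have -> : #|[set a; b; c]| = 3.
  rewrite [[set a; b; c]]setUC cardsU1 cards2 ab !inE.
  by rewrite ![c == _]eq_sym (negbTE ac) (negbTE bc).
by rewrite leqnn andbT; apply/subsetP => y /setUP[/set2P[]|/set1P] ->.
Qed.

Lemma three_cycle (X : finType) (A : {set X}) (f : X -> X) (u : X) :
  #|A| = 3 -> {in A, forall x, f x \in A} -> {in A &, injective f} ->
  {in A, forall x, f x != x} -> u \in A ->
  A = [set u; f u; f (f u)] /\ f (f (f u)) = u.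
Proof.
move=> cA fA f_inj f_nofix uA.
have fuA := fA _ uA; have ffuA := fA _ fuA.
have u_fu : u != f u by rewrite eq_sym f_nofix.
have fu_ffu : f u != f (f u) by rewrite eq_sym f_nofix.
have u_ffu : u != f (f u).
  apply/eqP => ffu.
  have [z zA] : exists2 z, z \in A & z \notin [set u; f u].
    apply/subsetPn; apply/negP => /subset_leq_card.
    by rewrite cA cards2 u_fu.
  rewrite !inE negb_or => /andP[z_u z_fu].
  have defA : A = [set u; f u; z].
    by apply: card3_fill; rewrite // eq_sym.
  move: (fA _ zA); rewrite {1}defA !inE -orbA => /or3P[] /eqP fz.
  - by move: z_fu; rewrite (f_inj _ _ zA fuA) ?fz ?eqxx // -ffu.
  - by move: z_u; rewrite (f_inj _ _ zA uA fz) ?eqxx.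
  - by move: (f_nofix _ zA); rewrite fz eqxx.
have defA := card3_fill cA uA fuA ffuA u_fu u_ffu fu_ffu.
split=> //; move: (fA _ ffuA); rewrite {1}defA !inE -orbA => /or3P[] /eqP // f3u.
  by move: u_ffu; rewrite (f_inj _ _ ffuA uA f3u) eqxx.
by move: (f_nofix _ ffuA); rewrite f3u eqxx.
Qed.

Lemma three_cycle_reach (X : finType) (A : {set X}) (f : X -> X) :
  #|A| = 3 -> {in A, forall x, f x \in A} -> {in A &, injective f} ->
  {in A, forall x, f x != x} -> {in A &, forall u w, exists k, iter k f u = w}.
Proof.
move=> cA fA f_inj f_nofix u w uA; have [-> _] := three_cycle cA fA f_inj f_nofix uA.
by rewrite !inE -orbA => /or3P[] /eqP ->; [exists 0 | exists 1 | exists 2].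
Qed.

Lemma reach_nofix (X : finType) (A : {set X}) (f : X -> X) :
  1 < #|A| -> {in A &, forall u w, exists k, iter k f u = w} -> {in A, forall x, f x != x}.
Proof.
move=> cA reach x xA; apply/eqP => fx.
have /card_gt0P[w] : 0 < #|A :\ x| by move: cA; rewrite (cardsD1 x A) xA.
rewrite !inE => /andP[wx wA]; have [k] := reach x w xA wA.
by rewrite iter_fix // => xw; rewrite xw eqxx in wx.
Qed.

Lemma set2_eq (X : finType) (x y p q : X) : [set x; y] = [set p; q] -> p != q ->
  (x = p /\ y = q) \/ (x = q /\ y = p).
Proof.
move=> xy_pq p_q.
have xpq : x \in [set p; q] by rewrite -xy_pq set21.
have ypq : y \in [set p; q] by rewrite -xy_pq set22.
have pxy : p \in [set x; y] by rewrite xy_pq set21.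
have qxy : q \in [set x; y] by rewrite xy_pq set22.
case/set2P: xpq => hx; case/set2P: ypq => hy; subst x y; auto.
  by case/set2P: qxy => qp; rewrite qp eqxx in p_q.
by case/set2P: pxy => pq; rewrite pq eqxx in p_q.
Qed.

Definition pairs (X : finType) (f : X -> X) : {set {set X}} :=
  [set [set x; f x] | x : X].

(** Two edges of F meet: the adjacency of the line graph of F (this is
    [share_rel] of the hexagon graph, for an arbitrary vertex type). *)
Definition meets (X : finType) (F : {set {set X}}) : rel {set X} :=
  fun E1 E2 => [&& E1 \in F, E2 \in F & ~~ [disjoint E1 & E2]].

Lemma pairs_at (X : finType) (f : X -> X) (x : X) : involutive f ->
  [set E in pairs f | x \in E] = [set [set x; f x]].
Proof.
move=> fK; apply/setP => E; rewrite !inE; apply/andP/eqP.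
  by case=> /imsetP[y _ ->] /set2P[]->; rewrite ?fK 1?setUC.
by move=> ->; split; [apply: imset_f | apply: set21].
Qed.

Section TwoInvolutions.
Variables (X : finType) (mu om : X -> X).
Hypotheses (muK : involutive mu) (omK : involutive om).
Hypothesis edges_differ : forall x y, [set x; mu x] != [set y; om y].

Local Notation F := (pairs mu :|: pairs om).

Lemma pairs_disjoint : [disjoint pairs mu & pairs om].
Proof.
rewrite -setI_eq0; apply/eqP/setP => E; rewrite !inE.
by apply/andP => -[/imsetP[x _ ->] /imsetP[y _ /eqP]]; rewrite (negbTE (edges_differ x y)).
Qed.

Lemma incident_edges x : [set E in F | x \in E] = [set [set x; mu x]; [set x; om x]].
Proof.
apply/setP => E; have /setP/(_ E) := pairs_at x muK; have /setP/(_ E) := pairs_at x omK.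
rewrite !inE => ho hm; by rewrite andb_orl hm ho.
Qed.

Lemma incident_edges_card x : #|[set E in F | x \in E]| = 2.
Proof. by rewrite incident_edges cards2 edges_differ. Qed.

(** One step along a cycle of F: an mu-edge followed by an om-edge. *)
Definition phi : X -> X := om \o mu.

Lemma phi_inj : injective phi.
Proof. exact: inj_comp (can_inj omK) (can_inj muK). Qed.

Definition orbit_of (a : X) : {set X} := [set y | fconnect phi a y].

Definition orbit_edges (a : X) : {set {set X}} :=
  [set [set y; mu y] | y in orbit_of a] :|: [set [set y; om y] | y in orbit_of a].

Lemma orbit_of_self a : a \in orbit_of a.
Proof. by rewrite inE connect0. Qed.

Lemma orbit_of_phi a y : (phi y \in orbit_of a) = (y \in orbit_of a).
Proof.
rewrite !inE; apply/idP/idP => ay; apply: connect_trans ay _.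
  by rewrite fconnect_sym ?fconnect1 //; apply: phi_inj.
exact: fconnect1.
Qed.

Lemma orbit_edges_at a z : (z \in orbit_of a) || (mu z \in orbit_of a) ->
  [set z; mu z] \in orbit_edges a /\ [set z; om z] \in orbit_edges a.
Proof.
case/orP => az; rewrite !inE; split; apply/orP.
- by left; apply: imset_f.
- by right; apply: imset_f.
- by left; apply/imsetP; exists (mu z); rewrite // muK setUC.
- right; apply/imsetP; exists (phi (mu z)); first by rewrite orbit_of_phi.
  by rewrite /phi /= omK muK setUC.
Qed.

Lemma orbit_edges_ends a E z : E \in orbit_edges a -> z \in E ->
  (z \in orbit_of a) || (mu z \in orbit_of a).
Proof.
rewrite inE => /orP[] /imsetP[y ay ->] /set2P[] ->; rewrite ?muK ?ay ?orbT //.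
by rewrite -[mu (om y) \in _]orbit_of_phi /phi /= muK omK ay orbT.
Qed.

Lemma meets_sym : symmetric (meets F).
Proof. by move=> E1 E2; rewrite /meets disjoint_sym andbCA. Qed.

Lemma meets_at E1 E2 z : E1 \in F -> E2 \in F -> z \in E1 -> z \in E2 -> meets F E1 E2.
Proof.
move=> E1F E2F zE1 zE2; rewrite /meets E1F E2F -setI_eq0.
by apply/set0Pn; exists z; rewrite inE zE1 zE2.
Qed.

Lemma orbit_edges_closed a E1 E2 : E1 \in orbit_edges a -> meets F E1 E2 ->
  E2 \in orbit_edges a.
Proof.
move=> aE1 /and3P[_ E2F]; rewrite -setI_eq0 => /set0Pn[z]; rewrite inE => /andP[zE1 zE2].
have [] := orbit_edges_at (orbit_edges_ends aE1 zE1).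
have : E2 \in [set E in F | z \in E] by rewrite inE E2F zE2.
by rewrite incident_edges => /set2P[] ->.
Qed.

(** ... and connected: the path {a, mu a}, {mu a, phi a}, {phi a, mu (phi a)}, ...
    runs through all of it. *)
Lemma orbit_edges_connected a E : E \in orbit_edges a ->
  connect (meets F) [set a; mu a] E.
Proof.
have muF x : [set x; mu x] \in F by apply/setUP; left; apply: imset_f.
have omF x : [set x; om x] \in F by apply/setUP; right; apply: imset_f.
have along n : connect (meets F) [set a; mu a] [set iter n phi a; mu (iter n phi a)].
  elim: n => [|n IH] //=; apply: connect_trans IH _; set y := iter n phi a.
  apply: (@connect_trans _ _ [set mu y; om (mu y)]); apply: connect1.
    by apply: (@meets_at _ _ (mu y)); rewrite ?set21 ?set22.
  by apply: (@meets_at _ _ (phi y)); rewrite ?set21 ?set22.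
rewrite inE => /orP[] /imsetP[y]; rewrite inE => /iter_findex ay ->.
  by rewrite -ay; apply: along.
apply: connect_trans (along (findex phi a y)) _; rewrite ay.
by apply: connect1; apply: (@meets_at _ _ y); rewrite ?set21.
Qed.

Lemma orbit_edges_component a E : E \in orbit_edges a ->
  [set E' | connect (meets F) E E'] = orbit_edges a.
Proof.
move=> aE; apply/setP => E'; rewrite inE; apply/idP/idP.
  case/connectP => p + ->; elim: p E aE => [|E2 p IH] E1 aE1 //=.
  by case/andP => /(orbit_edges_closed aE1); apply: IH.
move=> aE'; apply: connect_trans (orbit_edges_connected aE').
by rewrite (sym_connect_sym meets_sym); apply: orbit_edges_connected.
Qed.

Lemma orbit_edges_self a : [set a; mu a] \in orbit_edges a /\ [set a; om a] \in orbit_edges a.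
Proof. by apply: orbit_edges_at; rewrite orbit_of_self. Qed.

Lemma orbit_edges_cover (c : X -> bool) :
  (forall x, c (mu x) = ~~ c x) -> (forall x, c (om x) = ~~ c x) ->
  forall E, E \in F -> exists2 a, ~~ c a & E \in orbit_edges a.
Proof.
move=> c_mu c_om E /setUP[] /imsetP[x _ ->]; case cx: (c x);
  try by exists x; rewrite ?cx //; case: (orbit_edges_self x).
- exists (mu x); first by rewrite c_mu cx.
  by have [+ _] := orbit_edges_self (mu x); rewrite muK setUC.
- exists (om x); first by rewrite c_om cx.
  by have [_ +] := orbit_edges_self (om x); rewrite omK setUC.
Qed.

Lemma orbit_edges_om a x : [set x; om x] \in orbit_edges a ->
  exists2 y, y \in orbit_of a & x = y \/ x = om y.
Proof.
rewrite inE => /orP[] /imsetP[y ay xy].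
  by move: (edges_differ y x); rewrite -xy eqxx.
exists y => //; apply/set2P; rewrite -xy; exact: set21.
Qed.

End TwoInvolutions.

Section PerfectMatching.
Variables (X : finType) (M : {set {set X}}).
Hypothesis M_card2 : forall E, E \in M -> #|E| = 2.
Hypothesis M_deg1 : forall x, #|[set E in M | x \in E]| = 1.

Lemma matching_edge_uniq x E1 E2 : E1 \in M -> E2 \in M -> x \in E1 -> x \in E2 -> E1 = E2.
Proof.
move=> E1M E2M xE1 xE2; have /eqP/cards1P[E defE] := M_deg1 x.
have : E1 \in [set E in M | x \in E] by rewrite inE E1M xE1.
have : E2 \in [set E in M | x \in E] by rewrite inE E2M xE2.
by rewrite defE => /set1P -> /set1P ->.
Qed.

Lemma matching_edge_at x : exists y, [set x; y] \in M.
Proof.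
have /card_gt0P[E] : 0 < #|[set E in M | x \in E]| by rewrite M_deg1.
rewrite inE => /andP[EM xE]; have /eqP/cards2P[p [q [_ defE]]] := M_card2 EM.
move: xE; rewrite defE => /set2P[] ->; first by exists q; rewrite -defE.
by exists p; rewrite setUC -defE.
Qed.

Definition partner (x : X) : X := odflt x [pick y | [set x; y] \in M].

Lemma partner_edge x : [set x; partner x] \in M.
Proof.
rewrite /partner; case: pickP => [y //|none].
by have [y] := matching_edge_at x; rewrite none.
Qed.

Lemma partner_neq x : partner x != x.
Proof. by move: (M_card2 (partner_edge x)); rewrite cards2 eq_sym; case: eqP. Qed.

Lemma partner_uniq x y : [set x; y] \in M -> y = partner x.
Proof.
move=> xyM; have := matching_edge_uniq xyM (partner_edge x) (set21 _ _) (set21 _ _).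
move=> /setP/(_ y); rewrite !inE eqxx orbT eq_sym => /esym/orP[]/eqP // yx.
by have := M_card2 xyM; rewrite yx setUid cards1.
Qed.

Lemma partnerK : involutive partner.
Proof. by move=> x; apply/esym/partner_uniq; rewrite setUC partner_edge. Qed.

Lemma matching_pairs : M = pairs partner.
Proof.
apply/setP => E; apply/idP/imsetP => [EM | [x _ ->]]; last exact: partner_edge.
have /eqP/cards2P[p [q [_ defE]]] := M_card2 EM.
by exists p => //; rewrite defE -(partner_uniq (x := p) (y := q)) -?defE.
Qed.

End PerfectMatching.

(** An index i < 6 of a hexagon is determined by its parity and its residue
    mod 3; [port p k] is the index of parity p and residue k < 3. *)
Definition port (p : bool) (k : nat) : nat := if odd k == p then k else k + 3.

Lemma port_lt p k : k < 3 -> port p k < 6.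
Proof. by rewrite /port; case: k => [|[|[|]]] //; case: p. Qed.

Lemma port_odd p k : k < 3 -> odd (port p k) = p.
Proof. by rewrite /port; case: k => [|[|[|]]] //; case: p. Qed.

Lemma port_mod p k : k < 3 -> port p k %% 3 = k.
Proof. by rewrite /port; case: k => [|[|[|]]] //; case: p. Qed.

Lemma portE i : i < 6 -> port (odd i) (i %% 3) = i.
Proof. by case: i => [|[|[|[|[|[|]]]]]]. Qed.

Lemma index_cases i : i < 6 -> i = i %% 3 \/ i = i %% 3 + 3.
Proof. by case: i => [|[|[|[|[|[|]]]]]] //; auto. Qed.

Lemma port_inj i j : i < 6 -> j < 6 -> odd i = odd j -> i %% 3 = j %% 3 -> i = j.
Proof. by move=> i6 j6 ij ij3; rewrite -(portE i6) -(portE j6) ij ij3. Qed.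

Lemma hexagon_adjE i j : i < 6 -> j < 6 ->
  (j == i.+1 %% 6) || (i == j.+1 %% 6) = (odd j != odd i) && (j %% 3 != i %% 3).
Proof. by case: i => [|[|[|[|[|[|]]]]]] //; case: j => [|[|[|[|[|[|]]]]]]. Qed.

Lemma hv_ord (T : finType) (v : T) n : nat_of_ord (hv v n).2 = n %% 6.
Proof. by rewrite /= inordK // ltn_pmod. Qed.

Lemma hv_val (T : finType) (x : hvert T) : hv x.1 x.2 = x.
Proof. by case: x => v i; rewrite /hv /= modn_small ?inord_val. Qed.

Lemma hvP (T : finType) (x : hvert T) v n : x.1 = v -> nat_of_ord x.2 = n %% 6 -> x = hv v n.
Proof.
by case: x => w i /= <- xn; congr pair; apply: val_inj; rewrite /= inordK ?ltn_pmod.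
Qed.

Lemma hvert_eq (T : finType) (x y : hvert T) :
  x.1 = y.1 -> odd x.2 = odd y.2 -> x.2 %% 3 = y.2 %% 3 -> x = y.
Proof.
case: x y => [v i] [w j] /= -> ij ij3; congr pair; apply: val_inj.
exact: port_inj (ltn_ord i) (ltn_ord j) ij ij3.
Qed.

(** Blue edges join vertices of one hexagon with different parities and
    residues. *)
Definition hex_adj (T : finType) (x y : hvert T) : bool :=
  [&& x.1 == y.1, odd y.2 != odd x.2 & y.2 %% 3 != x.2 %% 3].

Lemma hex_adj_sym (T : finType) : symmetric (@hex_adj T).
Proof.
by move=> x y; rewrite /hex_adj [x.1 == _]eq_sym [odd x.2 == _]eq_sym [x.2 %% 3 == _]eq_sym.
Qed.

Lemma hex_adj_neq (T : finType) (x y : hvert T) : hex_adj x y -> x != y.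
Proof. by case/and3P=> _ odd_xy _; apply: contraNneq odd_xy => ->. Qed.

Lemma blue_edge_adj (T : finType) (E : {set hvert T}) :
  E \in blue_edges T -> exists x y, E = [set x; y] /\ hex_adj x y.
Proof.
rewrite inE => /existsP[v /existsP[i /eqP ->]]; exists (hv v i), (hv v i.+1); split=> //.
by rewrite /hex_adj eqxx !hv_ord (modn_small (ltn_ord i)) -hexagon_adjE ?ltn_pmod ?eqxx.
Qed.

Lemma blue_edgeP (T : finType) (x y : hvert T) : x != y ->
  ([set x; y] \in blue_edges T) = hex_adj x y.
Proof.
move=> xy; apply/idP/idP.
  case/blue_edge_adj => p [q [xy_pq adj]].
  by case: (set2_eq xy_pq (hex_adj_neq adj)) => -[-> ->] //; rewrite hex_adj_sym.
case/and3P=> /eqP xy1 odd_xy mod_xy; rewrite inE.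
have := hexagon_adjE (ltn_ord x.2) (ltn_ord y.2); rewrite odd_xy mod_xy /= => /orP[] /eqP adj.
  by apply/existsP; exists x.1; apply/existsP; exists x.2; rewrite hv_val -(hvP (esym xy1) adj).
apply/existsP; exists y.1; apply/existsP; exists y.2.
by rewrite hv_val -(hvP xy1 adj) setUC.
Qed.

Lemma blue_matching_involution (T : finType) (e : rel T) (idx : T -> T -> 'I_3)
    (M : {set {set hvert T}}) : blue_perfect_matching e idx M ->
  exists mu, [/\ involutive mu, forall x, hex_adj x (mu x) & M = pairs mu].
Proof.
case=> [[_ M_deg1] /subsetP M_blue].
have M_card2 E : E \in M -> #|E| = 2.
  by move/M_blue/blue_edge_adj => [x [y [-> /hex_adj_neq xy]]]; rewrite cards2 xy.
exists (partner M); split; [exact: partnerK | move=> x | exact: matching_pairs].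
have x_px : x != partner M x by rewrite eq_sym (partner_neq M_card2 M_deg1).
by rewrite -blue_edgeP // M_blue ?(partner_edge M_card2 M_deg1).
Qed.

Lemma faces_agree (T : finType) (e : rel T) (r1 r2 : T -> T -> T) :
  (forall u v, e u v -> e v (r1 v u)) -> (forall u v, e u v -> r1 v u = r2 v u) ->
  faces e r1 = faces e r2.
Proof.
move=> r1_adj r12.
have iter_eq n d : e d.1 d.2 ->
    iter n (face_step r1) d = iter n (face_step r2) d /\
    e (iter n (face_step r1) d).1 (iter n (face_step r1) d).2.
  move=> dd; elim: n => [|n [IHeq IHadj]] //=; rewrite -IHeq.
  by move: IHadj; case: (iter n _ d) => u v /= uv; rewrite /face_step /= r1_adj // r12.
rewrite /faces; apply: eq_in_imset => d; rewrite inE => dd.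
rewrite /face_edges.
suff -> : [set d' | fconnect (face_step r1) d d'] = [set d' | fconnect (face_step r2) d d'] by [].
apply/setP => d'; rewrite !inE.
apply/idP/idP => /iter_findex <-.
  by have [-> _] := iter_eq (findex (face_step r1) d d') d dd; apply: fconnect_iter.
by have [<- _] := iter_eq (findex (face_step r2) d d') d dd; apply: fconnect_iter.
Qed.

Section Hexagon.
Variables (T : finType) (e : rel T) (idx : T -> T -> 'I_3).
Hypotheses (e_cubic : cubic e) (idx_inj : index_assignment e idx).

Lemma e_sym : symmetric e. Proof. by case: e_cubic. Qed.
Lemma e_irr v : e v v = false. Proof. by case: e_cubic => _ ->. Qed.
Lemma card_nbhd v : #|nbhd e v| = 3. Proof. by case: e_cubic. Qed.

(** [facing v k] is the neighbour u of v with i_{v(u)} = k mod 3; the vertex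
    v_k of h_v is the port of h_v facing it. *)
Definition facing (v : T) (k : nat) : T :=
  odflt v [pick u in nbhd e v | (idx v u : nat) == k %% 3].

(** Such a neighbour exists, since i_v is a bijection from N(v) onto {0,1,2}. *)
Lemma facing_spec v k : e v (facing v k) /\ (idx v (facing v k) : nat) = k %% 3.
Proof.
rewrite /facing; case: pickP => [u /andP[] | none]; first by rewrite inE => ? /eqP.
have : (inord (k %% 3) : 'I_3) \in idx v @: nbhd e v.
  suff -> : idx v @: nbhd e v = setT by rewrite inE.
  by apply/eqP; rewrite eqEcard subsetT cardsT card_ord card_in_imset ?card_nbhd.
case/imsetP => u vu k_u; move: (none u).
by rewrite vu -k_u inordK ?ltn_pmod ?eqxx.
Qed.

Lemma facing_adj v k : e v (facing v k). Proof. by case: (facing_spec v k). Qed.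
Lemma idx_facing v k : (idx v (facing v k) : nat) = k %% 3. Proof. by case: (facing_spec v k). Qed.
Lemma facing_mod v k : facing v (k %% 3) = facing v k. Proof. by rewrite /facing modn_mod. Qed.

Lemma facing_idx v u : e v u -> facing v (idx v u) = u.
Proof.
move=> vu; apply: (idx_inj (v := v)); rewrite ?inE ?facing_adj //.
by apply: val_inj; rewrite /= idx_facing modn_small.
Qed.

Lemma facing_port v w p : e v w -> facing v (port p (idx v w)) = w.
Proof. by move=> vw; rewrite -facing_mod port_mod // facing_idx. Qed.

Lemma facing_neq v k : facing v k != v.
Proof. by apply: contraTneq (facing_adj v k) => ->; rewrite e_irr. Qed.

(** The white edge at x = v_i leads to the port of h_u facing v, of the
    opposite parity, where u is the neighbour faced by x. *)
Definition across (x : hvert T) : hvert T :=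
  let u := facing x.1 x.2 in hv u (port (~~ odd x.2) (idx u x.1)).

Lemma across_ord x : nat_of_ord (across x).2 = port (~~ odd x.2) (idx (facing x.1 x.2) x.1).
Proof. by rewrite hv_ord modn_small // port_lt. Qed.

Lemma across_odd x : odd (across x).2 = ~~ odd x.2.
Proof. by rewrite across_ord port_odd. Qed.

Lemma across_moves x : (across x).1 != x.1.
Proof. exact: facing_neq. Qed.

Lemma across_neq x : across x != x.
Proof. by apply: contraNneq (across_moves x) => ->. Qed.

Lemma across_hv v u k : e u v -> k < 6 -> k %% 3 = idx v u ->
  across (hv v k) = hv u (port (~~ odd k) (idx u v)).
Proof.
move=> uv k6 ku; rewrite /across hv_ord (modn_small k6) /=.
by rewrite -facing_mod ku facing_idx // e_sym.
Qed.

Lemma acrossK : involutive across.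
Proof.
move=> x; rewrite {2}/across; set u := facing x.1 x.2.
have xu : e x.1 u := facing_adj _ _.
rewrite (@across_hv u x.1) ?port_lt ?port_mod // port_odd // negbK.
by rewrite idx_facing portE // hv_val.
Qed.

Lemma wedge_across u v : e u v ->
  wedge idx u v = [set hv v (idx v u); across (hv v (idx v u))].
Proof.
move=> uv; have vu6 : idx v u < 6 by apply: leq_trans (ltn_ord _) _.
rewrite (@across_hv v u) ?modn_small //.
by rewrite /wedge /same_side /port; case: (odd (idx v u)); case: (odd (idx u v)).
Qed.

Lemma wedgebar_across u v : e u v ->
  wedgebar idx u v = [set hv v (idx v u + 3); across (hv v (idx v u + 3))].
Proof.
move=> uv; have vu6 : idx v u + 3 < 6 by rewrite (ltn_add2r 3 _ 3).
rewrite (@across_hv v u) ?modnDr ?modn_small // oddD addbT negbK.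
by rewrite /wedgebar /same_side /port; case: (odd (idx v u)); case: (odd (idx u v)).
Qed.

Lemma across_white (x : hvert T) : e (facing x.1 x.2) x.1 /\
  ([set x; across x] = wedge idx (facing x.1 x.2) x.1 \/
   [set x; across x] = wedgebar idx (facing x.1 x.2) x.1).
Proof.
case: x => v i /=; set u := facing v i.
have uv : e u v by rewrite e_sym facing_adj.
have iu : (idx v u : nat) = i %% 3 by rewrite idx_facing.
split=> //; rewrite wedge_across // wedgebar_across // iu -(hv_val (v, i)) /=.
by case: (index_cases (ltn_ord i)) => <-; auto.
Qed.

Lemma white_edgesE : white_edges e idx = pairs across.
Proof.
apply/setP => E; rewrite inE; apply/existsP/imsetP.
  case=> [[u v]] /= /andP[uv /orP[] /eqP ->].
    by rewrite wedge_across //; eexists.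
  by rewrite wedgebar_across //; eexists.
case=> x _ ->; exists (facing x.1 x.2, x.1) => /=.
by case: (across_white x) => -> [] ->; rewrite eqxx ?orbT.
Qed.

Lemma induced_subgraphE C : induced_subgraph e idx C =
  [set [set x.1; (across x).1] | x in [set x | [set x; across x] \in C]].
Proof.
apply/setP => E; apply/imsetP/imsetP.
  case=> [[u v]]; rewrite inE => /andP[uv wC] ->; rewrite /= in uv wC.
  have vu6 : idx v u < 6 by apply: leq_trans (ltn_ord _) _.
  have vu6' : idx v u + 3 < 6 by rewrite (ltn_add2r 3 _ 3).
  have acr n : n < 6 -> n %% 3 = idx v u -> (across (hv v n)).1 = u.
    by move=> n6 nu; rewrite (@across_hv v u).
  case/orP: wC; [rewrite wedge_across // | rewrite wedgebar_across //] => wC.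
    by exists (hv v (idx v u)); rewrite ?inE // acr ?modn_small // setUC.
  by exists (hv v (idx v u + 3)); rewrite ?inE // acr ?modnDr ?modn_small // setUC.
case=> x; rewrite inE => xC ->; exists (facing x.1 x.2, x.1); last by rewrite setUC.
case: (across_white x) => ux wx; rewrite inE ux.
by case: wx => <-; rewrite xC ?orbT.
Qed.

(** [entry d] is the even port of h_v facing u, for the dart d = (u, v). *)
Definition entry (d : T * T) : hvert T := hv d.2 (port false (idx d.2 d.1)).

Lemma entry_ord d : nat_of_ord (entry d).2 = port false (idx d.2 d.1).
Proof. by rewrite hv_ord modn_small // port_lt. Qed.

Lemma entry_odd d : odd (entry d).2 = false.
Proof. by rewrite entry_ord port_odd. Qed.

Lemma entry_mod d : (entry d).2 %% 3 = idx d.2 d.1.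
Proof. by rewrite entry_ord port_mod. Qed.

Lemma entry_facing (a : hvert T) : ~~ odd a.2 -> entry (facing a.1 a.2, a.1) = a.
Proof.
by move=> a_even; rewrite /entry /= idx_facing -(negbTE a_even) portE // hv_val.
Qed.

Lemma facing_entry d : e d.1 d.2 -> facing (entry d).1 (entry d).2 = d.1.
Proof. by case: d => u v uv; rewrite -facing_mod entry_mod facing_idx // e_sym. Qed.

Section BlueInvolution.
Variable mu : hvert T -> hvert T.
Hypotheses (muK : involutive mu) (mu_adj : forall x, hex_adj x (mu x)).

Lemma mu_fst x : (mu x).1 = x.1.
Proof. by case/and3P: (mu_adj x) => /eqP. Qed.

Lemma mu_odd x : odd (mu x).2 = ~~ odd x.2.
Proof. by case/and3P: (mu_adj x) => _; case: (odd _); case: (odd _). Qed.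

Lemma mu_across_differ x y : [set x; mu x] != [set y; across y].
Proof.
apply/eqP => xy.
have : x \in [set y; across y] by rewrite -xy set21.
have : mu x \in [set y; across y] by rewrite -xy set22.
case/set2P => mx; case/set2P => yx.
- by move: (hex_adj_neq (mu_adj x)); rewrite mx yx eqxx.
- by move: (across_moves y); rewrite -yx -mx mu_fst eqxx.
- by move: (across_moves y); rewrite -mx -yx mu_fst eqxx.
- by move: (hex_adj_neq (mu_adj x)); rewrite mx yx eqxx.
Qed.

Lemma pairs_blue_perfect : blue_perfect_matching e idx (pairs mu).
Proof.
have blue : pairs mu \subset blue_edges T.
  by apply/subsetP => E /imsetP[x _ ->]; rewrite blue_edgeP ?mu_adj ?hex_adj_neq.
split=> //; split=> [|x]; last by rewrite /deg_in pairs_at // cards1.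
by apply: subset_trans blue _; rewrite /hex_edges -setUA subsetU // subsetUl orbT.
Qed.

Local Notation phi := (phi mu across).

(** M and W are disjoint, so M ∪ W = M Δ W ... *)
Lemma union_symdiff : let W := white_edges e idx in
  pairs mu :|: W = (pairs mu :\: W) :|: (W :\: pairs mu).
Proof.
have disj := pairs_disjoint mu_across_differ.
by rewrite /= white_edgesE (setDidPl disj) (setDidPl _) // disjoint_sym.
Qed.

Lemma union_cycles : disjoint_union_of_cycles (pairs mu :|: white_edges e idx).
Proof.
rewrite white_edgesE; split=> [E /setUP[] /imsetP[x _ ->] | x].
- by rewrite cards2 hex_adj_neq ?mu_adj.
- by rewrite cards2 eq_sym across_neq.
- by right; apply: (incident_edges_card muK acrossK mu_across_differ).
Qed.

Definition rot_of (v u : T) : T := facing v (mu (entry (u, v))).2.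

Lemma rot_of_adj v u : e v (rot_of v u).
Proof. exact: facing_adj. Qed.

Lemma rot_of_inj v : {in nbhd e v &, injective (rot_of v)}.
Proof.
move=> u1 u2 vu1 vu2 /(congr1 (fun w => idx v w : nat)).
rewrite /rot_of !idx_facing => mod12.
have entry12 : entry (u1, v) = entry (u2, v).
  by apply: (can_inj muK); apply: hvert_eq; rewrite ?mu_fst ?mu_odd ?entry_odd.
have /val_inj : (idx v u1 : nat) = idx v u2.
  by rewrite -(entry_mod (u1, v)) -(entry_mod (u2, v)) entry12.
exact: idx_inj.
Qed.

Lemma rot_of_nofix v u : rot_of v u != u.
Proof.
apply: contraTneq (mu_adj (entry (u, v))) => /(congr1 (fun w => idx v w : nat)).
by rewrite idx_facing -(entry_mod (u, v)) => mod_eq; rewrite /hex_adj mod_eq eqxx !andbF.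
Qed.

Lemma rot_of_system : rotation_system e rot_of.
Proof.
have rot_in v : {in nbhd e v, forall u, rot_of v u \in nbhd e v}.
  by move=> u _; rewrite inE rot_of_adj.
move=> v; split=> //; first exact: rot_of_inj.
apply: three_cycle_reach; rewrite ?card_nbhd //; first exact: rot_of_inj.
by move=> u _; apply: rot_of_nofix.
Qed.

Lemma entry_step d : entry (face_step rot_of d) = phi (entry d).
Proof. by rewrite /phi /= /across mu_fst mu_odd entry_odd. Qed.

Lemma entry_iter d n : entry (iter n (face_step rot_of) d) = iter n phi (entry d).
Proof. by elim: n => //= n <-; rewrite entry_step. Qed.

Lemma dart_iter d n : e d.1 d.2 ->
  e (iter n (face_step rot_of) d).1 (iter n (face_step rot_of) d).2.
Proof. by case: n => [|n] // _; apply: rot_of_adj. Qed.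

Lemma orbit_of_entry d : orbit_of mu across (entry d) =
  [set entry d' | d' in [set d' | fconnect (face_step rot_of) d d']].
Proof.
apply/setP => y; rewrite inE; apply/idP/imsetP.
  move/iter_findex => <-; exists (iter (findex phi (entry d) y) (face_step rot_of) d).
    by rewrite inE fconnect_iter.
  by rewrite entry_iter.
by case=> d'; rewrite inE => /iter_findex <- ->; rewrite entry_iter fconnect_iter.
Qed.

Lemma across_entry d : e d.1 d.2 ->
  [set (entry d).1; (across (entry d)).1] = [set d.1; d.2].
Proof.
move=> dd; have -> : (across (entry d)).1 = d.1 by exact: facing_entry.
by rewrite setUC.
Qed.

Lemma induced_orbit_edges a : induced_subgraph e idx (orbit_edges mu across a) =
  [set [set y.1; (across y).1] | y in orbit_of mu across a].
Proof.
rewrite induced_subgraphE; apply/setP => E; apply/imsetP/imsetP => -[x].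
  rewrite inE => /(orbit_edges_om mu_across_differ) [y ay xy] ->; exists y => //.
  by case: xy => ->; rewrite ?acrossK // setUC.
move=> ax ->; exists x => //; rewrite inE.
have ax' : (x \in orbit_of mu across a) || (mu x \in orbit_of mu across a) by rewrite ax.
by have [] := orbit_edges_at muK acrossK ax'.
Qed.

Lemma face_edges_entry d : e d.1 d.2 ->
  face_edges rot_of d = induced_subgraph e idx (orbit_edges mu across (entry d)).
Proof.
move=> dd; rewrite induced_orbit_edges orbit_of_entry -imset_comp.
apply: eq_in_imset => d'; rewrite inE => /iter_findex <-.
by rewrite /comp (across_entry (dart_iter _ dd)).
Qed.

Lemma faces_rot_of : faces e rot_of = cycle_subgraphs e idx (pairs mu).
Proof.
have component a E := @orbit_edges_component _ _ _ muK acrossK a E.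
rewrite /cycle_subgraphs /cycles_of white_edgesE; apply/setP => G; apply/imsetP/imsetP.
  case=> d; rewrite inE => dd ->; exists (orbit_edges mu across (entry d)); last first.
    exact: face_edges_entry.
  have [self _] := orbit_edges_self muK acrossK (entry d).
  apply/imsetP; exists [set entry d; mu (entry d)]; last by rewrite (component _ _ self).
  by apply/setUP; left; apply: imset_f.
case=> C /imsetP[E EF ->] ->.
have [a a_even Ea] := orbit_edges_cover muK acrossK mu_odd across_odd EF.
exists (facing a.1 a.2, a.1); first by rewrite inE e_sym facing_adj.
by rewrite face_edges_entry /= 1?e_sym ?facing_adj // entry_facing // (component _ _ Ea).
Qed.
End BlueInvolution.

Section FromRotation.
(** Conversely, a rotation system rot defines a blue perfect matching: the
    even port facing u is matched to the odd port facing rot v u, i.e. an odd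
    port facing w is matched to the even port facing rot^-1 w = rot (rot w). *)
Variable rot : T -> T -> T.
Hypothesis rot_sys : rotation_system e rot.

Lemma rot_cycle v u : e v u ->
  [/\ e v (rot v u), rot v (rot v (rot v u)) = u, rot v u != u & rot v (rot v u) != u].
Proof.
move=> vu; have [rot_in rot_inj reach] := rot_sys v.
have nofix : {in nbhd e v, forall x, rot v x != x}.
  by apply: reach_nofix reach; rewrite card_nbhd.
have uN : u \in nbhd e v by rewrite inE.
have [_ rot3] := three_cycle (card_nbhd v) rot_in rot_inj nofix uN.
split=> //; first by have := rot_in _ uN; rewrite inE.
  exact: nofix.
by apply/eqP => r2; move: rot3 (nofix _ uN); rewrite r2 => ->; rewrite eqxx.
Qed.

Definition turn (x : hvert T) : T :=
  let u := facing x.1 x.2 in if odd x.2 then rot x.1 (rot x.1 u) else rot x.1 u.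

Definition mu_of (x : hvert T) : hvert T := hv x.1 (port (~~ odd x.2) (idx x.1 (turn x))).

Lemma turn_adj x : e x.1 (turn x).
Proof.
have [r1 _ _ _] := rot_cycle (facing_adj x.1 x.2).
by rewrite /turn; case: ifP => // _; case: (rot_cycle r1).
Qed.

Lemma mu_of_fst x : (mu_of x).1 = x.1.
Proof. by []. Qed.

Lemma mu_of_ord x : nat_of_ord (mu_of x).2 = port (~~ odd x.2) (idx x.1 (turn x)).
Proof. by rewrite hv_ord modn_small // port_lt. Qed.

Lemma mu_of_odd x : odd (mu_of x).2 = ~~ odd x.2.
Proof. by rewrite mu_of_ord port_odd. Qed.

Lemma facing_mu_of x : facing x.1 (mu_of x).2 = turn x.
Proof. by rewrite mu_of_ord facing_port ?turn_adj. Qed.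

(** Turning twice more from the partner leads back: rot^3 = id. *)
Lemma turn_mu_of x : turn (mu_of x) = facing x.1 x.2.
Proof.
have [_ rot3 _ _] := rot_cycle (facing_adj x.1 x.2).
by rewrite {1}/turn mu_of_odd mu_of_fst facing_mu_of /turn; case: (odd x.2).
Qed.

Lemma mu_ofK : involutive mu_of.
Proof.
move=> x; apply: hvert_eq => //; first by rewrite !mu_of_odd negbK.
by rewrite mu_of_ord port_mod // turn_mu_of idx_facing.
Qed.

Lemma mu_of_adj x : hex_adj x (mu_of x).
Proof.
have [_ _ r1 r2] := rot_cycle (facing_adj x.1 x.2).
have turn_neq : turn x != facing x.1 x.2 by rewrite /turn; case: ifP.
rewrite /hex_adj eqxx mu_of_odd mu_of_ord port_mod // -(idx_facing x.1 x.2) /=.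
apply/andP; split; first by case: (odd x.2).
apply: contra_neq turn_neq => /val_inj; apply: (idx_inj (v := x.1));
  by rewrite inE ?turn_adj ?facing_adj.
Qed.

Lemma rot_of_mu_of v u : e v u -> rot_of mu_of v u = rot v u.
Proof.
move=> vu; rewrite /rot_of -[v in facing v _]/((entry (u, v)).1) facing_mu_of.
by rewrite /turn entry_odd facing_entry // e_sym.
Qed.
End FromRotation.
End Hexagon.

Unset Implicit Arguments.

Theorem mainTheorem1 (T : finType) (e : rel T) (idx : T -> T -> 'I_3) :
  cubic e -> index_assignment e idx ->
  (forall M : {set {set hvert T}}, blue_perfect_matching e idx M ->
     [/\ M :|: white_edges e idx =
           (M :\: white_edges e idx) :|: (white_edges e idx :\: M),
         disjoint_union_of_cycles (M :|: white_edges e idx) &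
         exists rot : T -> T -> T,
           rotation_system e rot /\ faces e rot = cycle_subgraphs e idx M])
  /\
  (forall rot : T -> T -> T, rotation_system e rot ->
     exists M : {set {set hvert T}},
       blue_perfect_matching e idx M /\ faces e rot = cycle_subgraphs e idx M).
Proof.
move=> e_cubic idx_inj; split=> [M | rot rot_sys].
  case/blue_matching_involution => mu [muK mu_adj ->]; split.
  - exact: union_symdiff.
  - exact: union_cycles.
  - exists (rot_of e idx mu); split; first exact: rot_of_system.
    exact: faces_rot_of.
have muK := mu_ofK e_cubic idx_inj rot_sys; have mu_adj := mu_of_adj e_cubic idx_inj rot_sys.
exists (pairs (mu_of e idx rot)); split; first exact: pairs_blue_perfect.
rewrite -(faces_rot_of e_cubic idx_inj muK mu_adj); apply: faces_agree => u v uv.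
  by rewrite (e_sym e_cubic) in uv; case: (rot_cycle e_cubic rot_sys uv).
by rewrite rot_of_mu_of // (e_sym e_cubic).
Qed.
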